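(* Let $J=JCK(Z,\delta)$. The restriction map $\mathrm{Der}(J)_{\bar0}\to\mathrm{Der}(J_{\bar0})$, $\partial\mapsto\partial|_{J_{\bar0}}$, is injective.
   Context: Let $\mathbb F$ be a field of characteristic $\neq 2$, $Z$ a unital commutative associative $\mathbb F$-algebra, and $\delta$ a derivation of $Z$ such that $Z\delta(Z)=Z$ (the $\mathbb F$-span of all products $f\delta(g)$, $f,g\in Z$, is $Z$). The Cheng-Kac Jordan superalgebra $J=JCK(Z,\delta)=J_{\bar0}\oplus J_{\bar1}$ is defined as follows: $J_{\bar0}=Z1\oplus Zw_1\oplus Zw_2\oplus Zw_3$ and $J_{\bar1}=Zx\oplus Zx_1\oplus Zx_2\oplus Zx_3$ are free $Z$-modules of rank 4; $J_{\bar0}$ is the $Z$-algebra $(\mathbb F1\oplus\mathbb Fw_1\oplus\mathbb Fw_2\oplus\mathbb Fw_3)\otimes_{\mathbb F}Z$ with $1$ the identity, $w_1^2=w_2^2=1$, $w_3^2=-1$, $w_iw_j=0$ for $i\ne j$. For $f,g\in Z$ and $i,j\in\{1,2,3\}$ the remaining products are: $f(gx)=(fg)x$, $f(gx_j)=(fg)x_j$, $(fw_i)(gx)=(\delta(f)g)x_i$, $(fw_i)(gx_j)=-(fg)x_{i\times j}$, $(fx)(gx)=\delta(f)g-f\delta(g)$, $(fx)(gx_j)=-(fg)w_j$, $(fx_i)(gx)=(fg)w_i$, $(fx_i)(gx_j)=0$, extended by supercommutativity ($ab=(-1)^{|a||b|}ba$), where $x_{1\times2}=-x_{2\times1}=x_3$,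 $x_{1\times3}=-x_{3\times1}=x_2$, $x_{3\times2}=-x_{2\times3}=x_1$, $x_{i\times i}=0$. Derivations are super derivations: homogeneous linear $d$ with $d(ab)=d(a)b+(-1)^{|d||a|}ad(b)$. *)

From HB Require Import structures.
From mathcomp Require Import all_boot all_order all_algebra.
Set Implicit Arguments. Unset Strict Implicit. Unset Printing Implicit Defensive.
Import GRing.Theory.
Local Open Scope ring_scope.

(* Elements of J = JCK(Z,delta): coordinates w.r.t. the Z-basis
   1, w1, w2, w3 (even part J_0) and x, x1, x2, x3 (odd part J_1). *)
Record JCK (Z : Type) := mkJ {
  j1 : Z; jw1 : Z; jw2 : Z; jw3 : Z;
  jx : Z; jx1 : Z; jx2 : Z; jx3 : Z
}.

Section JCKdef.
Variables (F : fieldType) (Z : comAlgType F).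

Definition addJ (a b : JCK Z) : JCK Z :=
  mkJ (j1 a + j1 b) (jw1 a + jw1 b) (jw2 a + jw2 b) (jw3 a + jw3 b)
      (jx a + jx b) (jx1 a + jx1 b) (jx2 a + jx2 b) (jx3 a + jx3 b).

Definition scaleJ (k : F) (a : JCK Z) : JCK Z :=
  mkJ (k *: j1 a) (k *: jw1 a) (k *: jw2 a) (k *: jw3 a)
      (k *: jx a) (k *: jx1 a) (k *: jx2 a) (k *: jx3 a).

Definition is_evenJ (a : JCK Z) : Prop :=
  jx a = 0 /\ jx1 a = 0 /\ jx2 a = 0 /\ jx3 a = 0.
Definition is_oddJ (a : JCK Z) : Prop :=
  j1 a = 0 /\ jw1 a = 0 /\ jw2 a = 0 /\ jw3 a = 0.

Definition is_derivationZ (delta : Z -> Z) : Prop :=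
  (forall f g, delta (f + g) = delta f + delta g) /\
  (forall (k : F) f, delta (k *: f) = k *: delta f) /\
  (forall f g, delta (f * g) = delta f * g + f * delta g).

(* Z delta(Z) = Z : every element is an F-linear combination (equivalently,
   a finite sum, since Z is an F-algebra) of products f * delta g. *)
Definition ZdeltaZ_full (delta : Z -> Z) : Prop :=
  forall z : Z, exists s : seq (Z * Z), z = \sum_(p <- s) p.1 * delta p.2.

(* The product of JCK(Z, delta), obtained from the defining table by
   F-bilinearity and supercommutativity.  Writing a = e + o, b = e' + o'
   with e = c + sum u_i w_i, o = p x + sum q_j x_j (and primes for b):
     e e'  = c c' + u1 u1' + u2 u2' - u3 u3' + sum (c u_i' + u_i c') w_i
     e o'  = c p' x + sum_j c q_j' x_j + sum_i delta(u_i) p' x_i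
             - sum_{i,j} u_i q_j' x_{i x j}
     o e'  = e' o   (supercommutativity, one factor even)
     o o'  = delta(p) p' - p delta(p') + sum_j (q_j p' - p q_j') w_j. *)
Definition mulJ (delta : Z -> Z) (a b : JCK Z) : JCK Z :=
  let c := j1 a in let u1 := jw1 a in let u2 := jw2 a in let u3 := jw3 a in
  let p := jx a in let q1 := jx1 a in let q2 := jx2 a in let q3 := jx3 a in
  let c' := j1 b in let u1' := jw1 b in let u2' := jw2 b in let u3' := jw3 b in
  let p' := jx b in let q1' := jx1 b in let q2' := jx2 b in let q3' := jx3 b in
  mkJ
    (* 1 *)
    (c * c' + u1 * u1' + u2 * u2' - u3 * u3'
       + (delta p * p' - p * delta p'))
    (* w1 *) (c * u1' + u1 * c' + (q1 * p' - p * q1'))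
    (* w2 *) (c * u2' + u2 * c' + (q2 * p' - p * q2'))
    (* w3 *) (c * u3' + u3 * c' + (q3 * p' - p * q3'))
    (* x *)  (c * p' + c' * p)
    (* x1 *) (c * q1' + delta u1 * p' + (u2 * q3' - u3 * q2')
              + c' * q1 + delta u1' * p + (u2' * q3 - u3' * q2))
    (* x2 *) (c * q2' + delta u2 * p' + (u3 * q1' - u1 * q3')
              + c' * q2 + delta u2' * p + (u3' * q1 - u1' * q3))
    (* x3 *) (c * q3' + delta u3 * p' + (u2 * q1' - u1 * q2')
              + c' * q3 + delta u3' * p + (u2' * q1 - u1' * q2)).

(* Even (super)derivations of J = JCK(Z, delta): F-linear, parity
   preserving, and Leibniz (no sign since |d| = 0). *)
Definition is_even_derJ (delta : Z -> Z) (d : JCK Z -> JCK Z) : Prop :=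
  (forall a b, d (addJ a b) = addJ (d a) (d b)) /\
  (forall (k : F) a, d (scaleJ k a) = scaleJ k (d a)) /\
  (forall a, is_evenJ a -> is_evenJ (d a)) /\
  (forall a, is_oddJ a -> is_oddJ (d a)) /\
  (forall a b, d (mulJ delta a b) = addJ (mulJ delta (d a) b) (mulJ delta a (d b))).

End JCKdef.

(* The difference D = d1 - d2 is an even derivation of J vanishing on J_0, so
   it commutes with multiplication by even elements and is determined by its
   values on x, x1, x2, x3.  Write D x = p x + q1 x1 + q2 x2 + q3 x3.  Applying
   D to the even element x (g x) = - delta g gives 2 p delta(g) = 0 for all g,
   hence p = 0 since Z delta(Z) = Z and char F <> 2; applying D to
   w1 x = w2 x = 0 then kills q1, q2, q3.  Finally delta(f) x_i = (f w_i) x, so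
   delta(f) D(x_i) = (f w_i) D x = 0 for all f, whence D(x_i) = 0. *)

From HB Require Import structures.
From mathcomp Require Import all_boot all_order all_algebra.
From mathcomp Require Import ring.
Set Implicit Arguments. Unset Strict Implicit. Unset Printing Implicit Defensive.
Import GRing.Theory.
Local Open Scope ring_scope.

Section Derivation.
Variables (F : fieldType) (Z : comAlgType F) (delta : Z -> Z).
Hypothesis delta_der : is_derivationZ delta.

Lemma derD x y : delta (x + y) = delta x + delta y.
Proof. by case: delta_der. Qed.

Lemma derM x y : delta (x * y) = delta x * y + x * delta y.
Proof. by case: delta_der => _ []. Qed.

Lemma der0 : delta 0 = 0.
Proof. by apply: (addIr (delta 0)); rewrite -derD !add0r. Qed.

Lemma derN x : delta (- x) = - delta x.
Proof. by apply: (addIr (delta x)); rewrite -derD !addNr der0. Qed.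

Lemma derB x y : delta (x - y) = delta x - delta y.
Proof. by rewrite derD derN. Qed.

Lemma der1 : delta 1 = 0.
Proof. by apply: (addIr (delta 1)); rewrite -{3}[1]mul1r derM mulr1 mul1r add0r. Qed.

End Derivation.

Lemma ZdeltaZ_full_mul_eq0 (F : fieldType) (Z : comAlgType F) (delta : Z -> Z) z :
  ZdeltaZ_full delta -> (forall f, delta f * z = 0) -> z = 0.
Proof.
move=> full dz0; have [s s1] := full 1.
rewrite -[z]mul1r s1 mulr_suml big1 // => p _.
by rewrite -mulrA dz0 mulr0.
Qed.

Lemma addv_eq0_char2 (F : fieldType) (V : lmodType F) (v : V) :
  (2 \notin [pchar F])%N -> v + v = 0 -> v = 0.
Proof.
rewrite inE /= => two_neq0 vv0.
by rewrite -[v]scale1r -(mulVf two_neq0) -scalerA scaler_nat [v *+ 2]mulr2n vv0 scaler0.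
Qed.

Section JCKAlgebra.
Variables (F : fieldType) (Z : comAlgType F) (delta : Z -> Z).
Hypothesis delta_der : is_derivationZ delta.

Notation mulJ := (mulJ delta).
Notation addJ := (@addJ F Z).

Definition zeroJ : JCK Z := mkJ 0 0 0 0 0 0 0 0.
Definition subJ (a b : JCK Z) : JCK Z :=
  mkJ (j1 a - j1 b) (jw1 a - jw1 b) (jw2 a - jw2 b) (jw3 a - jw3 b)
      (jx a - jx b) (jx1 a - jx1 b) (jx2 a - jx2 b) (jx3 a - jx3 b).

Definition scalarJ (c : Z) : JCK Z := mkJ c 0 0 0 0 0 0 0.
Definition evenJ (c u1 u2 u3 : Z) : JCK Z := mkJ c u1 u2 u3 0 0 0 0.
Definition xJ : JCK Z := mkJ 0 0 0 0 1 0 0 0.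
Definition x1J : JCK Z := mkJ 0 0 0 0 0 1 0 0.
Definition x2J : JCK Z := mkJ 0 0 0 0 0 0 1 0.
Definition x3J : JCK Z := mkJ 0 0 0 0 0 0 0 1.

Ltac der_simpl := rewrite ?(derB delta_der, derD delta_der, derN delta_der, derM delta_der,
                            der0 delta_der, der1 delta_der).
Ltac jck_ring := rewrite /mulJ /addJ ?/subJ /=; der_simpl; congr mkJ; ring.

Lemma evenJ_is_even c u1 u2 u3 : is_evenJ (evenJ c u1 u2 u3).
Proof. by []. Qed.

Lemma scalarJ_is_even c : is_evenJ (scalarJ c).
Proof. by []. Qed.

Lemma mulJ_scalar c a :
  mulJ (scalarJ c) a =
  mkJ (c * j1 a) (c * jw1 a) (c * jw2 a) (c * jw3 a)
      (c * jx a) (c * jx1 a) (c * jx2 a) (c * jx3 a).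
Proof. by case: a => *; jck_ring. Qed.

Lemma mulJ0 a : mulJ a zeroJ = zeroJ.
Proof. by case: a => *; jck_ring. Qed.

Lemma mul0J a : mulJ zeroJ a = zeroJ.
Proof. by case: a => *; jck_ring. Qed.

Lemma add0J a : addJ zeroJ a = a.
Proof. by case: a => *; jck_ring. Qed.

Lemma subJ_eq0 a b : subJ a b = zeroJ -> a = b.
Proof.
case: a b => [? ? ? ? ? ? ? ?] [? ? ? ? ? ? ? ?] [] /subr0_eq-> /subr0_eq-> /subr0_eq->.
by move=> /subr0_eq-> /subr0_eq-> /subr0_eq-> /subr0_eq-> /subr0_eq->.
Qed.

Lemma JCK_decomposition a :
  a = addJ (evenJ (j1 a) (jw1 a) (jw2 a) (jw3 a))
      (addJ (mulJ (scalarJ (jx a)) xJ)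
      (addJ (mulJ (scalarJ (jx1 a)) x1J)
      (addJ (mulJ (scalarJ (jx2 a)) x2J) (mulJ (scalarJ (jx3 a)) x3J)))).
Proof. by rewrite !mulJ_scalar; case: a => *; jck_ring. Qed.

Lemma mulJ_x_scalar_x_even g : is_evenJ (mulJ xJ (mulJ (scalarJ g) xJ)).
Proof. by rewrite /is_evenJ /mulJ /=; der_simpl; do !split; ring. Qed.

Lemma mulJ_w_x f :
  [/\ mulJ (evenJ 0 f 0 0) xJ = mulJ (scalarJ (delta f)) x1J,
      mulJ (evenJ 0 0 f 0) xJ = mulJ (scalarJ (delta f)) x2J &
      mulJ (evenJ 0 0 0 f) xJ = mulJ (scalarJ (delta f)) x3J].
Proof. by split; jck_ring. Qed.

Lemma subJJ a : subJ a a = zeroJ.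
Proof. by rewrite /subJ !subrr. Qed.

Section DerivationDifference.
Variables d1 d2 : JCK Z -> JCK Z.
Hypotheses (d1_der : is_even_derJ delta d1) (d2_der : is_even_derJ delta d2).
Definition diffJ a := subJ (d1 a) (d2 a).

Lemma diffJD a b : diffJ (addJ a b) = addJ (diffJ a) (diffJ b).
Proof.
have [d1D _] := d1_der; have [d2D _] := d2_der.
rewrite /diffJ d1D d2D.
by case: (d1 a) => *; case: (d2 a) => *; case: (d1 b) => *; case: (d2 b) => *;
  jck_ring.
Qed.

Lemma diffJM a b : diffJ (mulJ a b) = addJ (mulJ (diffJ a) b) (mulJ a (diffJ b)).
Proof.
have [_ [_ [_ [_ d1M]]]] := d1_der; have [_ [_ [_ [_ d2M]]]] := d2_der.
rewrite /diffJ d1M d2M.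
by case: (d1 a) => *; case: (d2 a) => *; case: (d1 b) => *; case: (d2 b) => *;
  case: a => *; case: b => *; jck_ring.
Qed.

Lemma diffJ_odd a : is_oddJ a -> is_oddJ (diffJ a).
Proof.
move=> odd_a; have [_ [_ [_ [d1odd _]]]] := d1_der; have [_ [_ [_ [d2odd _]]]] := d2_der.
rewrite /is_oddJ /diffJ /=.
have [-> [-> [-> ->]]] := d1odd a odd_a; have [-> [-> [-> ->]]] := d2odd a odd_a.
by rewrite !subrr.
Qed.

End DerivationDifference.

Section Vanishing.
Hypotheses (full : ZdeltaZ_full delta) (char2 : (2 \notin [pchar F])%N).
Variable D : JCK Z -> JCK Z.
Hypotheses (D_add : forall a b, D (addJ a b) = addJ (D a) (D b))
           (D_mul : forall a b, D (mulJ a b) = addJ (mulJ (D a) b) (mulJ a (D b)))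
           (D_odd : forall a, is_oddJ a -> is_oddJ (D a))
           (D_even : forall a, is_evenJ a -> D a = zeroJ).

Lemma derJ_mul_evenl e b : is_evenJ e -> D (mulJ e b) = mulJ e (D b).
Proof. by move=> even_e; rewrite D_mul D_even // mul0J add0J. Qed.

Lemma mulJ_derivatives_eq0 v :
  (forall f, mulJ (scalarJ (delta f)) v = zeroJ) -> v = zeroJ.
Proof.
case: v => ? ? ? ? ? ? ? ? h; congr mkJ; apply: (ZdeltaZ_full_mul_eq0 full) => f;
  by move: (h f); rewrite mulJ_scalar => -[].
Qed.

Lemma derJ_x_eq0 : D xJ = zeroJ.
Proof.
have x_gx g : addJ (mulJ (D xJ) (mulJ (scalarJ g) xJ))
                   (mulJ xJ (mulJ (scalarJ g) (D xJ))) = zeroJ.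
  by rewrite -derJ_mul_evenl ?scalarJ_is_even // -D_mul (D_even (mulJ_x_scalar_x_even g)).
have w_Dx W : is_evenJ W -> mulJ W xJ = zeroJ -> mulJ W (D xJ) = zeroJ.
  by move=> even_W Wx0; rewrite -derJ_mul_evenl // Wx0 D_even.
have w1x0 : mulJ (evenJ 0 1 0 0) xJ = zeroJ by jck_ring.
have w2x0 : mulJ (evenJ 0 0 1 0) xJ = zeroJ by jck_ring.
move: (w_Dx _ (evenJ_is_even _ _ _ _) w1x0) (w_Dx _ (evenJ_is_even _ _ _ _) w2x0).
have odd_x : is_oddJ xJ by [].
move: (D_odd odd_x) x_gx; clear w_Dx w1x0 w2x0.
case: (D xJ) => c u1 u2 u3 p q1 q2 q3 [/= -> [-> [-> ->]]] x_gx w1Dx w2Dx.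
have -> : p = 0.
  apply: (ZdeltaZ_full_mul_eq0 full) => g; apply: (addv_eq0_char2 char2).
  move: (congr1 (@j1 Z) (x_gx g)); rewrite /mulJ /=; der_simpl => E.
  by rewrite -oppr0 -E; ring.
move: (congr1 (@jx2 Z) w1Dx) (congr1 (@jx3 Z) w1Dx) (congr1 (@jx3 Z) w2Dx).
rewrite /mulJ /=; der_simpl => q3E q2E q1E.
have q1_0 : q1 = 0 by rewrite -q1E; ring.
have q2_0 : q2 = 0 by rewrite -oppr0 -q2E; ring.
have q3_0 : q3 = 0 by rewrite -oppr0 -q3E; ring.
by rewrite q1_0 q2_0 q3_0.
Qed.

Lemma derJ_xi_eq0 : [/\ D x1J = zeroJ, D x2J = zeroJ & D x3J = zeroJ].
Proof.
by split; apply: mulJ_derivatives_eq0 => f; have [w1x w2x w3x] := mulJ_w_x f;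
  rewrite -derJ_mul_evenl ?scalarJ_is_even // -?w1x -?w2x -?w3x derJ_mul_evenl // derJ_x_eq0 mulJ0.
Qed.

Lemma derJ_eq0 a : D a = zeroJ.
Proof.
rewrite (JCK_decomposition a) !D_add D_even // !derJ_mul_evenl ?scalarJ_is_even //.
have [-> -> ->] := derJ_xi_eq0.
by rewrite derJ_x_eq0 !mulJ0 !add0J.
Qed.

End Vanishing.

End JCKAlgebra.

Theorem mainTheorem3 (F : fieldType) (Z : comAlgType F) (delta : Z -> Z) :
  (2 \notin [pchar F])%N ->
  is_derivationZ delta ->
  ZdeltaZ_full delta ->
  forall d1 d2 : JCK Z -> JCK Z,
    is_even_derJ delta d1 -> is_even_derJ delta d2 ->
    (forall a : JCK Z, is_evenJ a -> d1 a = d2 a) ->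
    forall a : JCK Z, d1 a = d2 a.
Proof.
move=> char2 delta_der full d1 d2 d1_der d2_der d1_d2_even a.
apply/subJ_eq0/(derJ_eq0 delta_der full char2 (D := diffJ d1 d2)).
- exact: diffJD d1_der d2_der.
- by move=> b c; rewrite diffJM.
- exact: diffJ_odd d1_der d2_der.
- by move=> b even_b; rewrite /diffJ d1_d2_even // subJJ.
Qed.
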